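(* Let $G=(V,E)$ be a connected undirected graph with $V=\{1,\dots,n\}$, $E=\{1,\dots,m\}$, labeled nodes $1,\dots,n_l$ (with $1\le n_l<n$), and edge dissimilarities $d_e>0$. Set $\lambda=0$. Then for every unlabeled node $p\in\{n_l+1,\dots,n\}$ and every vector of labels $\vec f_l=(f(1),\dots,f(n_l))^{\top}$, the flow-based prediction $f(p)=\vec w(p)^{\top}\vec f_l$ coincides with the Harmonic Functions prediction at $p$, i.e. with the $p$-th entry of $\vec f_u=-L_{uu}^{-1}L_{ul}\vec f_l$, where $L=AD^{-1}A^{\top}$, $D=\mathrm{diag}(d_1,\dots,d_m)$, and $L_{uu}$, $L_{ul}$ are the blocks of $L$ with rows indexed by unlabeled nodes and columns indexed by unlabeled, resp. labeled, nodes. (Equivalently, $\vec f_u$ is the minimizer of $\sum_{(i,j)\in E}-L_{ij}(f_i-f_j)^2$ over $\vec f\in\mathbb R^n$ subject to $f_i=f(i)$ for $i\le n_l$.)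
   Context: Orient each edge of $G$ arbitrarily and let $A$ be the $n\times m$ signed incidence matrix: for edge $e$ oriented from $i$ to $j$, $A_{ie}=+1$, $A_{je}=-1$, other entries of column $e$ zero. Let $A_l$ be the submatrix of rows $1,\dots,n_l$ and $A_u$ the submatrix of the remaining rows. For an unlabeled node $p$, let $\vec b_p\in\mathbb R^{n-n_l}$ be the vector (indexed by unlabeled nodes) that is $0$ everywhere except $-1$ at the entry of $p$. For $\lambda\ge0$, the flow $\vec x\in\mathbb R^m$ is the unique minimizer of $\frac12\sum_{e=1}^m d_e(x_e^2+\lambda|x_e|)$ subject to $A_u\vec x=\vec b_p$, and the prediction weights are $\vec w(p)=A_l\vec x\in\mathbb R^{n_l}$; the flow-based prediction is $f(p)=\sum_{i=1}^{n_l}w_i(p)f(i)$. *)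

From HB Require Import structures.
From mathcomp Require Import all_boot all_order all_algebra.
Set Implicit Arguments. Unset Strict Implicit. Unset Printing Implicit Defensive.
Import Order.TTheory GRing.Theory Num.Theory.
Local Open Scope ring_scope.

(* An oriented graph on nodes 'I_n with edges 'I_m: edge e goes src e -> tgt e. *)

Definition adj (n m : nat) (src tgt : 'I_m -> 'I_n) : rel 'I_n :=
  fun i j => [exists e : 'I_m, ((src e == i) && (tgt e == j))
                            || ((src e == j) && (tgt e == i))].

Definition simple_graph (n m : nat) (src tgt : 'I_m -> 'I_n) : Prop :=
  (forall e, src e != tgt e) /\
  (forall e e', ((src e == src e') && (tgt e == tgt e'))
                || ((src e == tgt e') && (tgt e == src e')) -> e = e').

Definition connected_graph (n m : nat) (src tgt : 'I_m -> 'I_n) : Prop :=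
  forall i j : 'I_n, connect (adj src tgt) i j.

Definition incidence (R : pzRingType) (n m : nat) (src tgt : 'I_m -> 'I_n)
  : 'M[R]_(n, m) :=
  \matrix_(i, e) (if i == src e then 1 else if i == tgt e then -1 else 0).

Definition bvec (R : pzRingType) (nu : nat) (p : 'I_nu) : 'cV[R]_nu :=
  \col_j (if j == p then -1 else 0).

Definition flow_obj (R : realFieldType) (m : nat) (d : 'I_m -> R) (lambda : R)
  (x : 'cV[R]_m) : R :=
  2^-1 * \sum_(e < m) d e * (x e 0 ^+ 2 + lambda * `|x e 0|).

(* x is a minimizer of the objective subject to A_u x = b_p, where nodes are
   'I_(nl + nu): the first nl are labeled, the last nu unlabeled. *)
Definition is_flow (R : realFieldType) (nl nu m : nat) (src tgt : 'I_m -> 'I_(nl + nu))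
  (d : 'I_m -> R) (lambda : R) (p : 'I_nu) (x : 'cV[R]_m) : Prop :=
  let A := incidence R src tgt in
  dsubmx A *m x = bvec R p /\
  forall y : 'cV[R]_m, dsubmx A *m y = bvec R p ->
    flow_obj d lambda x <= flow_obj d lambda y.

Definition flow_pred (R : realFieldType) (nl nu m : nat) (src tgt : 'I_m -> 'I_(nl + nu))
  (x : 'cV[R]_m) (fl : 'cV[R]_nl) : R :=
  let w := usubmx (incidence R src tgt) *m x in
  \sum_(i < nl) w i 0 * fl i 0.

Definition laplacian (R : realFieldType) (n m : nat) (src tgt : 'I_m -> 'I_n)
  (d : 'I_m -> R) : 'M[R]_n :=
  let A := incidence R src tgt in
  A *m invmx (diag_mx (\row_e d e)) *m A^T.

Definition harmonic_pred (R : realFieldType) (nl nu m : nat) (src tgt : 'I_m -> 'I_(nl + nu))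
  (d : 'I_m -> R) (fl : 'cV[R]_nl) : 'cV[R]_nu :=
  let L := laplacian src tgt d in
  - (invmx (drsubmx L) *m dlsubmx L *m fl).

From HB Require Import structures.
From mathcomp Require Import all_boot all_order all_algebra.
From mathcomp Require Import ring.
Set Implicit Arguments. Unset Strict Implicit. Unset Printing Implicit Defensive.
Import Order.TTheory GRing.Theory Num.Theory.
Local Open Scope ring_scope.

(* With lambda = 0 the flow is the minimizer of the weighted norm
   sum_e d_e x_e^2 over the affine space A_u x = b_p.  The Gram matrix
   L_uu = A_u D^-1 A_u^T is invertible: a vector in its kernel extends by 0 on
   the labeled nodes to a potential that is constant along every edge, hence
   zero by connectivity.  By Pythagoras the unique minimizer is then
   x = D^-1 A_u^T L_uu^-1 b_p, so w(p) = A_l x = L_lu L_uu^-1 b_p and, L being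
   symmetric, w(p)^T f_l = -(L_uu^-1 L_ul f_l)_p. *)

Lemma invmx_diag (R : fieldType) n (r : 'rV[R]_n) :
  (forall i, r 0 i != 0) -> invmx (diag_mx r) = diag_mx (map_mx GRing.inv r).
Proof.
move=> r_neq0.
have rK : diag_mx r *m diag_mx (map_mx GRing.inv r) = 1%:M.
  apply/matrixP => i j; rewrite mul_mx_diag !mxE.
  by case: eqVneq => [->|_]; rewrite ?mulr1n ?mulfV ?mulr0n ?mul0r.
have [r_unit _] := mulmx1_unit rK.
by rewrite -[invmx _]mulmx1 -rK mulmxA mulVmx ?mul1mx.
Qed.

Definition weighted_sqnorm (R : pzSemiRingType) m (c : 'I_m -> R) (x : 'cV[R]_m) : R :=
  \sum_e c e * x e 0 ^+ 2.

Section WeightedSqnorm.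
Variables (R : realFieldType) (m : nat) (c : 'I_m -> R).
Hypothesis c_gt0 : forall e, 0 < c e.

Lemma weighted_sqnorm_ge0 x : 0 <= weighted_sqnorm c x.
Proof. by apply: sumr_ge0 => e _; rewrite mulr_ge0 ?sqr_ge0 ?ltW. Qed.

Lemma weighted_sqnorm_eq0 x : weighted_sqnorm c x = 0 -> x = 0.
Proof.
move=> x0; apply/matrixP => e j; rewrite (ord1 j) mxE.
have /(_ e isT) := psumr_eq0P (fun i _ => mulr_ge0 (ltW (c_gt0 i)) (sqr_ge0 (x i 0))) x0.
by move/eqP; rewrite mulf_eq0 gt_eqF //= sqrf_eq0 => /eqP.
Qed.

End WeightedSqnorm.

Section MinimumNormSolution.
Variables (R : realFieldType) (k m : nat) (B : 'M[R]_(k, m)) (d : 'I_m -> R).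
Hypothesis d_gt0 : forall e, 0 < d e.

Definition inv_weights : 'M[R]_m := diag_mx (\row_e (d e)^-1).

Definition weighted_gram : 'M[R]_k := B *m inv_weights *m B^T.

Definition min_norm_sol (b : 'cV[R]_k) : 'cV[R]_m :=
  inv_weights *m B^T *m invmx weighted_gram *m b.

Lemma tr_weighted_gram : weighted_gram^T = weighted_gram.
Proof. by rewrite /weighted_gram !trmx_mul trmxK tr_diag_mx mulmxA. Qed.

Lemma weighted_gram_quad (v : 'rV[R]_k) :
  (v *m weighted_gram *m v^T) 0 0 =
  weighted_sqnorm (fun e => (d e)^-1) (v *m B)^T.
Proof.
rewrite /weighted_gram !mulmxA -mulmxA -trmx_mul mxE.
by apply: eq_bigr => e _; rewrite mul_mx_diag !mxE; ring.
Qed.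

Lemma unitmx_weighted_gram :
  (forall v : 'rV[R]_k, v *m B = 0 -> v = 0) -> weighted_gram \in unitmx.
Proof.
move=> B_inj; rewrite unitmxE unitfE; apply/negP => /det0P [v /negP vN0 vG0].
apply: vN0; apply/eqP/B_inj/trmx_inj; rewrite trmx0.
apply: (weighted_sqnorm_eq0 (c := fun e => (d e)^-1)) => [e|].
  by rewrite invr_gt0.
by rewrite -weighted_gram_quad vG0 mul0mx mxE.
Qed.

Hypothesis gram_unit : weighted_gram \in unitmx.

Lemma min_norm_solP b : B *m min_norm_sol b = b.
Proof. by rewrite /min_norm_sol !mulmxA -/weighted_gram mulmxV ?mul1mx. Qed.

Lemma min_norm_sol_orth b (h : 'cV[R]_m) :
  B *m h = 0 -> \sum_e d e * min_norm_sol b e 0 * h e 0 = 0.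
Proof.
move=> Bh0; pose mu := invmx weighted_gram *m b.
have solE e : min_norm_sol b e 0 = (d e)^-1 * (B^T *m mu) e 0.
  by rewrite /min_norm_sol -!mulmxA mul_diag_mx !mxE.
transitivity (((B^T *m mu)^T *m h) 0 0).
  rewrite mxE; apply: eq_bigr => e _.
  by rewrite solE mulrA mulfV ?gt_eqF // mul1r [in RHS]mxE.
by rewrite trmx_mul trmxK -mulmxA Bh0 mulmx0 mxE.
Qed.

Lemma weighted_sqnorm_min_norm_sol b y : B *m y = b ->
  weighted_sqnorm d y =
  weighted_sqnorm d (min_norm_sol b) + weighted_sqnorm d (y - min_norm_sol b).
Proof.
move=> Byb; set xs := min_norm_sol b.
have Bh0 : B *m (y - xs) = 0 by rewrite mulmxBr Byb min_norm_solP subrr.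
have -> : weighted_sqnorm d y = \sum_e (d e * xs e 0 ^+ 2 +
    d e * (y - xs) e 0 ^+ 2 + 2 * (d e * xs e 0 * (y - xs) e 0)).
  by apply: eq_bigr => e _; rewrite !mxE; ring.
by rewrite !big_split /= -mulr_sumr (min_norm_sol_orth b Bh0) mulr0 addr0.
Qed.

Lemma min_norm_sol_min b y : B *m y = b ->
  weighted_sqnorm d (min_norm_sol b) <= weighted_sqnorm d y.
Proof.
by move/weighted_sqnorm_min_norm_sol->; rewrite lerDl weighted_sqnorm_ge0.
Qed.

Lemma min_norm_sol_unique b y : B *m y = b ->
  weighted_sqnorm d y <= weighted_sqnorm d (min_norm_sol b) -> y = min_norm_sol b.
Proof.
move/weighted_sqnorm_min_norm_sol->; rewrite gerDl => le0.
apply/eqP; rewrite -subr_eq0; apply/eqP/(weighted_sqnorm_eq0 d_gt0).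
by apply/eqP; rewrite eq_le le0 weighted_sqnorm_ge0.
Qed.

End MinimumNormSolution.

Lemma tr_bvec_mul (R : pzRingType) k (p : 'I_k) (v : 'cV[R]_k) :
  ((bvec R p)^T *m v) 0 0 = - v p 0.
Proof.
rewrite mxE (bigD1 p) //= !mxE eqxx mulN1r big1 ?addr0 // => i ip.
by rewrite !mxE (negbTE ip) mul0r.
Qed.

Section Graph.
Variables (n m : nat) (src tgt : 'I_m -> 'I_n).

Lemma row_mul_incidence (R : pzRingType) (v : 'rV[R]_n) e : src e != tgt e ->
  (v *m incidence R src tgt) 0 e = v 0 (src e) - v 0 (tgt e).
Proof.
move=> st; rewrite mxE (bigD1 (src e)) //= (bigD1 (tgt e)) 1?eq_sym //=.
rewrite !mxE eqxx eq_sym (negbTE st) eqxx mulr1 mulrN1 big1 ?addr0 //.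
move=> i /andP [i_src i_tgt].
by rewrite !mxE (negbTE i_src) (negbTE i_tgt) mulr0.
Qed.

Lemma connected_edge_invariant (T : Type) (f : 'I_n -> T) :
  connected_graph src tgt -> (forall e, f (src e) = f (tgt e)) ->
  forall i j, f i = f j.
Proof.
move=> conn f_edge i j; have /connectP [s path_s ->] := conn i j.
elim: s i path_s => //= a s IHs i /andP [/existsP [e edge_ia] path_s].
rewrite -IHs //.
by case/orP: edge_ia => /andP [/eqP <- /eqP <-]; rewrite f_edge.
Qed.

End Graph.

Section HarmonicFlow.
Variables (R : realFieldType) (nl nu m : nat) (src tgt : 'I_m -> 'I_(nl + nu))
  (d : 'I_m -> R).
Hypothesis d_gt0 : forall e, 0 < d e.

Let A := incidence R src tgt.
Let Al := usubmx A.
Let Au := dsubmx A.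

Lemma unlabeled_incidence_row_free :
  (0 < nl)%N -> simple_graph src tgt -> connected_graph src tgt ->
  forall v : 'rV[R]_nu, v *m Au = 0 -> v = 0.
Proof.
move=> nl_gt0 [no_loop _] conn v vAu0.
pose pot := row_mx (0 : 'rV[R]_nl) v.
have potA0 : pot *m A = 0 by rewrite -(vsubmxK A) mul_row_col mul0mx add0r.
have pot_edge e : pot 0 (src e) = pot 0 (tgt e).
  apply/eqP; rewrite -subr_eq0 -row_mul_incidence //.
  by rewrite -/A potA0 mxE.
have pot_const := connected_edge_invariant conn pot_edge.
apply/matrixP => i k; rewrite (ord1 i) mxE.
have := pot_const (lshift nu (Ordinal nl_gt0)) (rshift nl k).
by rewrite row_mxEl row_mxEr mxE.
Qed.

Lemma laplacianE :
  laplacian src tgt d = col_mx Al Au *m inv_weights d *m row_mx Al^T Au^T.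
Proof.
rewrite /laplacian invmx_diag => [|e]; last by rewrite mxE gt_eqF.
rewrite -tr_col_mx vsubmxK /inv_weights; congr (_ *m diag_mx _ *m _).
by apply/matrixP => i e; rewrite !mxE.
Qed.

Lemma laplacian_uu : drsubmx (laplacian src tgt d) = weighted_gram Au d.
Proof.
by rewrite laplacianE /drsubmx !mul_col_mx col_mxKd mul_mx_row row_mxKr.
Qed.

Lemma laplacian_ul :
  dlsubmx (laplacian src tgt d) = Au *m inv_weights d *m Al^T.
Proof.
by rewrite laplacianE /dlsubmx !mul_col_mx col_mxKd mul_mx_row row_mxKl.
Qed.

Lemma flow_obj0 (x : 'cV[R]_m) : flow_obj d 0 x = 2^-1 * weighted_sqnorm d x.
Proof.
by congr (_ * _); apply: eq_bigr => e _; rewrite mul0r addr0.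
Qed.

Hypothesis gram_unit : weighted_gram Au d \in unitmx.
Variable p : 'I_nu.

Lemma is_flow0P x : is_flow src tgt d 0 p x <-> x = min_norm_sol Au d (bvec R p).
Proof.
have sol := min_norm_solP gram_unit (bvec R p).
split=> [[Ax_b x_min] | ->]; last first.
  split=> // y Ay_b; rewrite !flow_obj0 ler_pM2l ?invr_gt0 ?ltr0n //.
  exact: min_norm_sol_min.
apply: min_norm_sol_unique => //.
by have := x_min _ sol; rewrite !flow_obj0 ler_pM2l ?invr_gt0 ?ltr0n.
Qed.

Lemma flow_pred_min_norm_sol fl :
  flow_pred src tgt (min_norm_sol Au d (bvec R p)) fl =
  harmonic_pred src tgt d fl p 0.
Proof.
rewrite /harmonic_pred laplacian_uu laplacian_ul mxE -tr_bvec_mul.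
have wT : (Al *m min_norm_sol Au d (bvec R p))^T =
    (bvec R p)^T *m invmx (weighted_gram Au d) *m Au *m inv_weights d *m Al^T.
  rewrite /min_norm_sol !trmx_mul trmx_inv tr_weighted_gram trmxK.
  by rewrite /inv_weights tr_diag_mx !mulmxA.
by rewrite !mulmxA -wT mxE; apply: eq_bigr => i _; rewrite !mxE.
Qed.

End HarmonicFlow.

Theorem proposition1 (R : realFieldType) (nl nu m : nat)
  (src tgt : 'I_m -> 'I_(nl + nu)) (d : 'I_m -> R) :
  (0 < nl)%N -> (0 < nu)%N ->
  simple_graph src tgt -> connected_graph src tgt ->
  (forall e, 0 < d e) ->
  forall (p : 'I_nu) (fl : 'cV[R]_nl),
    (exists x : 'cV[R]_m, is_flow src tgt d 0 p x) /\
    (forall x : 'cV[R]_m, is_flow src tgt d 0 p x ->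
       flow_pred src tgt x fl = harmonic_pred src tgt d fl p 0).
Proof.
move=> nl_gt0 _ simple conn d_gt0 p fl.
set Au := dsubmx (incidence R src tgt).
have gram_unit : weighted_gram Au d \in unitmx.
  apply: (unitmx_weighted_gram d_gt0).
  exact: (unlabeled_incidence_row_free nl_gt0 simple conn).
split; first by exists (min_norm_sol Au d (bvec R p)); apply/is_flow0P.
by move=> x /(is_flow0P d_gt0 gram_unit) ->; apply: flow_pred_min_norm_sol.
Qed.
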